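(* For integers $n\ge1$, $0\le l\le n-1$, and $c\in\mathbb{C}\setminus\{0\}$, $$\sum_{\substack{l_1+\cdots+l_n=l\\ l_i\ge0}}\binom{l}{l_1,\ldots,l_n}\prod_{i=1}^n b_{l_i}(c)=B_l^{(l-n+1)}(cn+1).$$
   Context: The Bernoulli polynomials of the second kind are defined by $\frac{t(1+t)^x}{\log(1+t)}=\sum_{l\ge0}b_l(x)\frac{t^l}{l!}$. The Bernoulli polynomials of order $a$ are defined by $\left(\frac{t}{e^t-1}\right)^a e^{xt}=\sum_{n\ge0}B_n^{(a)}(x)\frac{t^n}{n!}$. $\binom{l}{l_1,\ldots,l_n}$ is the multinomial coefficient. *)

(* Formal power series are represented by their coefficient
   sequences nat -> R over a field R of characteristic 0 (we work over an
   arbitrary numClosedFieldType, which generalises C). *)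
From HB Require Import structures.
From mathcomp Require Import all_boot all_order all_algebra.
Set Implicit Arguments. Unset Strict Implicit. Unset Printing Implicit Defensive.
Import Order.TTheory GRing.Theory Num.Theory.
Local Open Scope ring_scope.

Section FPS.
Variable R : fieldType.

Definition fmul (f g : nat -> R) : nat -> R :=
  fun n => \sum_(i < n.+1) f i * g (n - i)%N.

Definition fone : nat -> R := fun n => (n == 0%N)%:R.

Definition fpow (f : nat -> R) (k : nat) : nat -> R := iter k (fmul f) fone.

Fixpoint finv_seq (f : nat -> R) (n : nat) : seq R :=
  match n with
  | 0 => [:: (f 0%N)^-1]
  | m.+1 => let s := finv_seq f m in
      rcons s (- (f 0%N)^-1 * \sum_(k < m.+1) f k.+1 * nth 0 s (m - k)%N)
  end.

Definition finv (f : nat -> R) : nat -> R := fun n => nth 0 (finv_seq f n) n.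

Definition gbinom (x : R) (k : nat) : R :=
  (\prod_(i < k) (x - i%:R)) / (k`!)%:R.

Definition log1p_over_t : nat -> R := fun k => (-1) ^+ k / (k.+1)%:R.
Definition binom_series (x : R) : nat -> R := fun k => gbinom x k.
Definition expm1_over_t : nat -> R := fun k => 1 / ((k.+1)`!)%:R.
Definition exp_series (x : R) : nat -> R := fun k => x ^+ k / (k`!)%:R.

(* Bernoulli polynomials of the second kind:
   t (1+t)^x / log(1+t) = sum_l b_l(x) t^l / l! *)
Definition bern2 (l : nat) (x : R) : R :=
  (l`!)%:R * fmul (finv log1p_over_t) (binom_series x) l.

(* (t/(e^t-1))^a for integer a *)
Definition tdiv_pow (a : int) : nat -> R :=
  match a with
  | Posz k => fpow (finv expm1_over_t) k
  | Negz k => fpow expm1_over_t k.+1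
  end.

(* Bernoulli polynomials of order a:
   (t/(e^t-1))^a e^{xt} = sum_m B_m^{(a)}(x) t^m/m! *)
Definition bernoulli_ord (a : int) (m : nat) (x : R) : R :=
  (m`!)%:R * fmul (tdiv_pow a) (exp_series x) m.

End FPS.

Definition multinom (n l : nat) (L : {ffun 'I_n -> 'I_l.+1}) : nat :=
  (l`! %/ \prod_(i < n) (L i)`!)%N.

(* Work in the ring of formal power series.  With
   [psi = t/log(1+t)], the left side is [l!] times the coefficient of [t^l]
   in [(psi (1+t)^c)^n = psi^n (1+t)^(cn)], and, writing [n = l + 1 + m],
   the right side is [l!] times the coefficient of [t^l] in
   [((e^t-1)/t)^m e^((cn+1)t)]. *)
From Pilot Require Import Defs.
From HB Require Import structures.
From mathcomp Require Import all_boot all_order all_algebra.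
From mathcomp Require Import boolp.
From mathcomp Require Import ring zify.
Import Order.TTheory GRing.Theory Num.Theory.
Local Open Scope ring_scope.

Set Implicit Arguments. Unset Strict Implicit. Unset Printing Implicit Defensive.

Section FormalPowerSeries.
Variable R : fieldType.

Definition fps : Type := nat -> R.
Implicit Types f g h : fps.
HB.instance Definition _ := gen_eqMixin fps.
HB.instance Definition _ := gen_choiceMixin fps.

Definition fps_zero : fps := fun _ => 0.
Definition fps_add (f g : fps) : fps := fun k => f k + g k.
Definition fps_opp (f : fps) : fps := fun k => - f k.

Lemma fps_addA : associative fps_add.
Proof. by move=> f g h; apply: funext => k; rewrite /fps_add addrA. Qed.
Lemma fps_addC : commutative fps_add.
Proof. by move=> f g; apply: funext => k; rewrite /fps_add addrC. Qed.
Lemma fps_add0 : left_id fps_zero fps_add.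
Proof. by move=> f; apply: funext => k; rewrite /fps_add add0r. Qed.
Lemma fps_addN : left_inverse fps_zero fps_opp fps_add.
Proof. by move=> f; apply: funext => k; rewrite /fps_add /fps_opp addNr. Qed.
HB.instance Definition _ :=
  GRing.isZmodule.Build fps fps_addA fps_addC fps_add0 fps_addN.

(* The truncation of [f] to a polynomial of degree at most [N]: the first
   [N + 1] coefficients of a Cauchy product only depend on such truncations,
   which lets us borrow the ring laws of [{poly R}]. *)
Definition trunc (N : nat) (f : fps) : {poly R} := \poly_(i < N.+1) f i.

Lemma coef_trunc N f i : (i <= N)%N -> (trunc N f)`_i = f i.
Proof. by move=> iN; rewrite coef_poly ltnS iN. Qed.

Lemma fmul_truncE f g N k :
  (k <= N)%N -> fmul f g k = (trunc N f * trunc N g)`_k.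
Proof.
move=> kN; rewrite coefM; apply: eq_bigr => -[i /= ik] _.
have iN : (i <= N)%N by rewrite (leq_trans _ kN) // -ltnS.
by rewrite !coef_trunc // (leq_trans (leq_subr _ _) kN).
Qed.

Lemma coefMl_eq (p q r : {poly R}) k :
  (forall i, (i <= k)%N -> p`_i = q`_i) -> (p * r)`_k = (q * r)`_k.
Proof. by move=> pq; rewrite !coefM; apply: eq_bigr => i _; rewrite pq // -ltnS. Qed.

Lemma coefMr_eq (p q r : {poly R}) k :
  (forall i, (i <= k)%N -> p`_i = q`_i) -> (r * p)`_k = (r * q)`_k.
Proof. by move=> pq; rewrite mulrC (coefMl_eq _ pq) mulrC. Qed.

Lemma coef_trunc_fmul f g N i :
  (i <= N)%N -> (trunc N (fmul f g))`_i = (trunc N f * trunc N g)`_i.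
Proof. by move=> iN; rewrite coef_trunc // (fmul_truncE _ _ iN). Qed.

Lemma fmulA : associative (@fmul R).
Proof.
move=> f g h; apply: funext => k.
rewrite (fmul_truncE _ _ (leqnn k)) [RHS](fmul_truncE _ _ (leqnn k)).
rewrite (coefMl_eq _ (fun i ik => coef_trunc_fmul f g ik)).
by rewrite (coefMr_eq _ (fun i ik => coef_trunc_fmul g h ik)) mulrA.
Qed.

Lemma fmulC : commutative (@fmul R).
Proof.
move=> f g; apply: funext => k.
by rewrite !(fmul_truncE _ _ (leqnn k)) mulrC.
Qed.

Lemma fmul1 : left_id (@fone R) (@fmul R).
Proof.
move=> f; apply: funext => k; rewrite /fmul big_ord_recl /fone eqxx mul1r subn0.
by rewrite big1 ?addr0 // => i _; rewrite mul0r.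
Qed.

Lemma fmulDl : left_distributive (@fmul R) fps_add.
Proof.
move=> f g h; apply: funext => k; rewrite /fmul /fps_add -big_split /=.
by apply: eq_bigr => i _; rewrite mulrDl.
Qed.

Lemma fone_neq0 : (@fone R : fps) != 0.
Proof.
apply/eqP => /(congr1 (fun f : fps => f 0%N)); rewrite /fone eqxx /=.
by move/eqP; rewrite oner_eq0.
Qed.

HB.instance Definition _ :=
  GRing.Zmodule_isComNzRing.Build fps fmulA fmulC fmul1 fmulDl fone_neq0.

Lemma fpsD f g k : (f + g) k = f k + g k. Proof. by []. Qed.
Lemma fpsB f g k : (f - g) k = f k - g k. Proof. by []. Qed.
Lemma fpsM f g k : (f * g) k = \sum_(i < k.+1) f i * g (k - i)%N. Proof. by []. Qed.
Lemma fps1 k : (1 : fps) k = (k == 0%N)%:R. Proof. by []. Qed.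

Lemma fpsM_truncE f g N k : (k <= N)%N -> (f * g) k = (trunc N f * trunc N g)`_k.
Proof. exact: fmul_truncE. Qed.

Lemma fpsX_truncE f n N k : (k <= N)%N -> (f ^+ n) k = (trunc N f ^+ n)`_k.
Proof.
elim: n k => [|n IH] k kN; first by rewrite !expr0 fps1 coef1.
rewrite !exprS (fpsM_truncE _ _ kN); apply: coefMr_eq => i ik.
by rewrite coef_trunc ?IH // (leq_trans ik kN).
Qed.

Lemma fpowE f k : fpow f k = f ^+ k.
Proof. by elim: k => [|k IH] //=; rewrite exprS -IH. Qed.

End FormalPowerSeries.

Section Derivative.
Variable R : fieldType.
Local Notation fps := (fps R).
Implicit Types f g : fps.

Definition fC (a : R) : fps := fun k => if k == 0%N then a else 0.
Definition fX : fps := fun k => (k == 1%N)%:R.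
Definition D f : fps := fun k => k.+1%:R * f k.+1.

Lemma fC_mul a f k : (fC a * f) k = a * f k.
Proof.
rewrite fpsM big_ord_recl subn0 /fC /= big1 ?addr0 // => i _.
by rewrite mul0r.
Qed.

Lemma fCD a b : fC (a + b) = fC a + fC b.
Proof. by apply: funext => k; rewrite fpsD /fC; case: (k == 0%N); rewrite ?addr0. Qed.

Lemma fC1 : fC 1 = 1.
Proof. by apply: funext => k; rewrite fps1 /fC; case: (k == 0%N). Qed.

Lemma fC0 : fC 0 = 0.
Proof. by apply: funext => k; rewrite /fC; case: (k == 0%N). Qed.

Lemma fCn n : fC n%:R = n%:R.
Proof. by elim: n => [|n IH]; rewrite ?fC0 // -addn1 !natrD fCD IH fC1. Qed.

Lemma fn_mul n f k : (n%:R * f) k = n%:R * f k.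
Proof. by rewrite -fCn fC_mul. Qed.

Lemma fX_mul0 f : (fX * f) 0%N = 0.
Proof. by rewrite fpsM big_ord1 /fX mul0r. Qed.

Lemma fX_mulS f k : (fX * f) k.+1 = f k.
Proof.
rewrite fpsM big_ord_recl big_ord_recl /fX /= mul0r add0r mul1r subn1.
by rewrite big1 ?addr0 // => i _; rewrite mul0r.
Qed.

Lemma fXD f k : (fX * D f) k = k%:R * f k.
Proof. by case: k => [|k]; rewrite ?fX_mul0 ?mul0r // fX_mulS. Qed.

Lemma D_add f g : D (f + g) = D f + D g.
Proof. by apply: funext => k; rewrite /D fpsD mulrDr. Qed.

Lemma D_1 : D 1 = 0.
Proof. by apply: funext => k; rewrite /D fps1 mulr0. Qed.

Lemma D_X : D fX = 1.
Proof. by apply: funext => -[|k]; rewrite /D /fX fps1 /= ?mulr1 ?mulr0. Qed.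

Lemma coef_deriv_trunc f N i :
  (i <= N)%N -> (trunc N.+1 f)^`()`_i = (trunc N (D f))`_i.
Proof. by move=> iN; rewrite coef_deriv !coef_trunc ?ltnS // /D mulr_natl. Qed.

(* The Leibniz rule, transported from polynomials through truncations. *)
Lemma D_mul f g : D (f * g) = D f * g + f * D g.
Proof.
apply: funext => k; rewrite fpsD {1}/D (fpsM_truncE _ _ (leqnn k.+1)).
rewrite mulr_natl -coef_deriv derivM coefD.
rewrite !(fpsM_truncE _ _ (leqnn k)); congr (_ + _).
- rewrite (coefMl_eq _ (fun i ik => coef_deriv_trunc f ik)).
  by apply: coefMr_eq => i ik; rewrite !coef_trunc // ltnW.
- rewrite (coefMr_eq _ (fun i ik => coef_deriv_trunc g ik)).
  by apply: coefMl_eq => i ik; rewrite !coef_trunc // ltnW.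
Qed.

Lemma D_exp f n : D (f ^+ n.+1) = n.+1%:R * f ^+ n * D f.
Proof.
elim: n => [|n IH]; first by rewrite expr1 expr0 mulr1 mul1r.
rewrite exprS D_mul IH exprS (natrD _ 1 n.+1).
by move: (f ^+ n) (n.+1%:R : fps) => y c; ring.
Qed.

End Derivative.
Arguments fX {R}.

Lemma prod_scale_monomial (R : comNzRingType) n (c : 'I_n -> R) (e : 'I_n -> nat) :
  \prod_(i < n) (c i *: 'X^(e i))
  = (\prod_(i < n) c i) *: ('X^(\sum_(i < n) e i) : {poly R}).
Proof.
elim: n c e => [|n IH] c e; first by rewrite !big_ord0 scale1r.
by rewrite !big_ord_recr /= IH exprD -scalerAl -scalerA -scalerAr.
Qed.

(* [l_1! ... l_n!] divides [(l_1 + ... + l_n)!], so that [multinom] is an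
   exact quotient. *)
Lemma prod_fact_dvd n (F : 'I_n -> nat) :
  (\prod_(i < n) (F i)`! %| (\sum_(i < n) F i)`!)%N.
Proof.
elim: n F => [|n IH] F; first by rewrite !big_ord0.
rewrite !big_ord_recr /=.
set S := (\sum_(i < n) F (widen_ord (leqnSn n) i))%N.
rewrite -(bin_fact (leq_addr (F ord_max) S)) addKn.
by apply: dvdn_mull; apply: dvdn_mul => //; apply: IH.
Qed.

Lemma multinomE n l (L : {ffun 'I_n -> 'I_l.+1}) :
  (\sum_(i < n) (L i : nat))%N = l ->
  (multinom L * \prod_(i < n) (L i)`!)%N = l`!.
Proof.
move=> sumL; rewrite /multinom divnK //.
by have := prod_fact_dvd (fun i => (L i : nat)); rewrite sumL.
Qed.

Section PowerCoefficients.
Variable R : fieldType.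
Local Notation fps := (fps R).

Lemma coef_fps_exp (a : fps) n l :
  (a ^+ n) l
  = \sum_(L : {ffun 'I_n -> 'I_l.+1} | (\sum_(i < n) (L i : nat))%N == l)
      \prod_(i < n) a (L i).
Proof.
rewrite (fpsX_truncE _ _ (leqnn l)) /trunc poly_def.
rewrite -[n in _ ^+ n]card_ord -prodr_const bigA_distr_bigA /= coef_sum.
rewrite [RHS]big_mkcond /=; apply: eq_bigr => L _.
rewrite (prod_scale_monomial (fun i => a (L i)) (fun i => (L i : nat))).
by rewrite coefZ coefXn eq_sym; case: ifP; rewrite ?mulr1 ?mulr0.
Qed.

Lemma egf_exp (a : fps) n l :
  \sum_(L : {ffun 'I_n -> 'I_l.+1} | (\sum_(i < n) (L i : nat))%N == l)
     ((multinom L)%:R * \prod_(i < n) (((L i)`!)%:R * a (L i)))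
  = (l`!)%:R * (a ^+ n) l.
Proof.
rewrite coef_fps_exp mulr_sumr; apply: eq_bigr => L /eqP sumL.
by rewrite big_split /= mulrA -natr_prod -natrM multinomE.
Qed.

End PowerCoefficients.

Section Inverse.
Variable R : fieldType.
Local Notation fps := (fps R).
Local Notation finv := Defs.finv.
Implicit Types f : nat -> R.

Lemma size_finv_seq f n : size (finv_seq f n) = n.+1.
Proof. by elim: n => [|n IH] //=; rewrite size_rcons IH. Qed.

Lemma nth_finv_seq f n i : (i <= n)%N -> nth 0 (finv_seq f n) i = finv f i.
Proof.
elim: n => [|n IH]; first by rewrite leqn0 => /eqP ->.
rewrite leq_eqVlt => /orP [/eqP -> //|]; rewrite ltnS => iN.
by rewrite /= nth_rcons size_finv_seq ltnS iN IH.
Qed.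

Lemma finvS f m :
  finv f m.+1 = - (f 0%N)^-1 * \sum_(k < m.+1) f k.+1 * finv f (m - k)%N.
Proof.
rewrite /finv /= nth_rcons size_finv_seq ltnn eqxx; congr (_ * _).
by apply: eq_bigr => k _; rewrite nth_finv_seq // leq_subr.
Qed.

Lemma mul_finv f : f 0%N != 0 -> (f : fps) * (finv f : fps) = 1.
Proof.
move=> f0; apply: funext => -[|m].
  by rewrite fpsM big_ord1 fps1 mulfV.
rewrite fpsM big_ord_recl fps1 /= subn0 finvS.
under eq_bigr => i _ do rewrite /bump /= subSS.
by rewrite mulrA mulrN mulfV // mulN1r addNr.
Qed.

End Inverse.

Section ClassicalSeries.
Variable R : numFieldType.
Local Notation fps := (fps R).
Implicit Types (g : fps) (x y : R).

Lemma natS_neq0 k : k.+1%:R != 0 :> R.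
Proof. by rewrite pnatr_eq0. Qed.

Lemma fact_neq0 k : (k`!)%:R != 0 :> R.
Proof. by rewrite pnatr_eq0 -lt0n fact_gt0. Qed.

(* [k.+1 != 0] in the normal form produced by [field]. *)
Lemma add1n_neq0 k : 1 + k%:R != 0 :> R.
Proof. by rewrite addrC natr1 natS_neq0. Qed.

Lemma mul1pX0 g : ((1 + fX) * g) 0%N = g 0%N.
Proof. by rewrite mulrDl mul1r fpsD fX_mul0 addr0. Qed.

Lemma mul1pXS g k : ((1 + fX) * g) k.+1 = g k.+1 + g k.
Proof. by rewrite mulrDl mul1r fpsD fX_mulS. Qed.

(* The binomial series [(1 + t)^x]. It is characterised by its constant term
   [1] and the differential equation [(1 + t) g' = x g]; this gives the
   exponent laws [(1+t)^x (1+t)^y = (1+t)^(x+y)]. *)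
Definition binser x : fps := binom_series x.

Lemma gbinom0 x : gbinom x 0 = 1.
Proof. by rewrite /gbinom big_ord0 divr1. Qed.

Lemma binser0 x : binser x 0%N = 1.
Proof. exact: gbinom0. Qed.

Lemma gbinomS x k : k.+1%:R * gbinom x k.+1 = (x - k%:R) * gbinom x k.
Proof.
rewrite /gbinom big_ord_recr /= factS natrM invfM.
by field; rewrite fact_neq0 add1n_neq0.
Qed.

Lemma gbinom_absorb x k : k.+1%:R * gbinom x k.+1 = x * gbinom (x - 1) k.
Proof.
rewrite /gbinom big_ord_recl /= subr0 factS natrM invfM.
under eq_bigr => i _ do rewrite /bump /= -natr1 opprD addrA addrAC.
by field; rewrite fact_neq0 add1n_neq0.
Qed.

Lemma binser_ode x : (1 + fX) * D (binser x) = fC x * binser x.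
Proof.
apply: funext => -[|k]; rewrite fC_mul.
  by rewrite mul1pX0 /D /binser /binom_series (gbinomS x 0) subr0.
by rewrite mul1pXS /D /binser /binom_series (gbinomS x k.+1); ring.
Qed.

Lemma binser_uniq x g :
  g 0%N = 1 -> (1 + fX) * D g = fC x * g -> g = binser x.
Proof.
move=> g0 gode; apply: funext; elim => [|k IH]; first by rewrite g0 binser0.
have := congr1 (fun f : fps => f k) gode; rewrite /= fC_mul => gode_k.
apply: (mulfI (natS_neq0 k)); rewrite /binser /binom_series gbinomS.
case: k IH gode_k => [|k] IH; first by rewrite mul1pX0 /D g0 gbinom0 subr0 => ->.
rewrite mul1pXS /D /binser /binom_series in IH * => /(canRL (addrK _)) ->.
by rewrite -IH mulrBl.
Qed.

Lemma binserD x y : binser x * binser y = binser (x + y).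
Proof.
apply: binser_uniq; first by rewrite fpsM big_ord1 !binser0 mulr1.
have -> : (1 + fX) * D (binser x * binser y)
  = (1 + fX) * D (binser x) * binser y + (1 + fX) * D (binser y) * binser x.
  by rewrite D_mul; ring.
by rewrite !binser_ode fCD; ring.
Qed.

Lemma binser1 : binser 1 = 1 + fX.
Proof.
symmetry; apply: binser_uniq; first by rewrite fpsD fps1 /fX addr0.
by rewrite D_add D_1 D_X add0r mulr1 fC1 mul1r.
Qed.

Lemma binser_succ x : binser (x + 1) = (1 + fX) * binser x.
Proof. by rewrite -binserD binser1 mulrC. Qed.

Lemma D_binser_succ x : D (binser (x + 1)) = fC (x + 1) * binser x.
Proof.
by apply: funext => k; rewrite fC_mul /D /binser /binom_series gbinom_absorb addrK.
Qed.

Lemma binserX x n : binser x ^+ n = binser (x * n%:R).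
Proof.
elim: n => [|n IH]; last by rewrite exprS IH binserD -natr1 mulrDr mulr1 addrC.
rewrite expr0 mulr0; apply: binser_uniq => //.
by rewrite D_1 fC0 mulr0 mul0r.
Qed.

Definition expser y : fps := exp_series y.
Definition expm1ser : fps := @expm1_over_t R.

Lemma expser0 y : expser y 0%N = 1.
Proof. by rewrite /expser /exp_series expr0 divr1. Qed.

Lemma expser_ode y : D (expser y) = fC y * expser y.
Proof.
apply: funext => k; rewrite fC_mul /D /expser /exp_series factS natrM invfM exprS.
by field; rewrite fact_neq0 add1n_neq0.
Qed.

Lemma expser_uniq y g : g 0%N = 1 -> D g = fC y * g -> g = expser y.
Proof.
move=> g0 gode; apply: funext; elim => [|k IH]; first by rewrite g0 expser0.
have := congr1 (fun f : fps => f k) gode; have := congr1 (fun f : fps => f k) (expser_ode y).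
by rewrite /= !fC_mul /D IH => <- /(mulfI (natS_neq0 k)).
Qed.

Lemma expserD a b : expser a * expser b = expser (a + b).
Proof.
apply: expser_uniq; first by rewrite fpsM big_ord1 !expser0 mulr1.
by rewrite D_mul !expser_ode fCD; ring.
Qed.

Lemma expser1 : expser 1 = 1 + fX * expm1ser.
Proof.
apply: funext => -[|k]; first by rewrite fpsD fps1 expser0 fX_mul0 addr0.
by rewrite fpsD fps1 fX_mulS add0r /expser /exp_series /expm1ser /expm1_over_t expr1n.
Qed.

(* Since
   [(t log(1+t)/t)' = 1/(1+t)], [psi] satisfies the Riccati-type identity
   [psi^2 = (1 + t)(psi - t psi')]. *)
Definition logser : fps := @log1p_over_t R.
Definition psi : fps := Defs.finv logser.

Lemma logser0 : logser 0%N = 1.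
Proof. by rewrite /logser /log1p_over_t expr0 divr1. Qed.

Lemma logser_psi : logser * psi = 1.
Proof. by apply: mul_finv; rewrite logser0 oner_neq0. Qed.

Lemma psi0 : psi 0%N = 1.
Proof. by rewrite /psi /Defs.finv /= -/logser logser0 invr1. Qed.

Lemma logser_ode : (1 + fX) * (logser + fX * D logser) = 1.
Proof.
have coef k : (logser + fX * D logser) k = (-1) ^+ k.
  rewrite fpsD fXD /logser /log1p_over_t.
  by move: ((-1) ^+ k) => s; field; rewrite add1n_neq0.
apply: funext => -[|k]; first by rewrite mul1pX0 coef fps1.
by rewrite mul1pXS !coef fps1 exprS mulN1r addNr.
Qed.

Lemma psi_sqr : psi ^+ 2 = (1 + fX) * (psi - fX * D psi).
Proof.
have inv : logser * psi - 1 = 0 by rewrite logser_psi subrr.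
have dinv : D logser * psi + logser * D psi = 0 by rewrite -D_mul logser_psi D_1.
have ode : (1 + fX) * (logser + fX * D logser) - 1 = 0 by rewrite logser_ode subrr.
apply/subr0_eq.
have -> : psi ^+ 2 - (1 + fX) * (psi - fX * D psi) =
  - psi ^+ 2 * ((1 + fX) * (logser + fX * D logser) - 1) +
  (1 + fX) * (psi * (logser * psi - 1)
    + fX * psi * (D logser * psi + logser * D psi)
    - fX * D psi * (logser * psi - 1)) by ring.
by rewrite inv dinv ode; ring.
Qed.

End ClassicalSeries.

Section KeyIdentity.
Variable R : numFieldType.
Local Notation fps := (fps R).
Local Notation psi := (psi R).
Local Notation expm1ser := (expm1ser R).
Implicit Types x : R.

(* Differentiating [psi^(j+1) (1+t)^(x+1)] and using [psi_sqr] to eliminate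
   [psi'] expresses [t D] of it through lower powers of [psi]. *)
Lemma psi_binser_ode j x :
  fX * D (psi ^+ j.+1 * binser (x + 1))
  = j.+1%:R * (psi ^+ j.+1 * binser (x + 1) - psi ^+ j.+2 * binser x)
    + fC (x + 1) * (fX * (psi ^+ j.+1 * binser x)).
Proof.
rewrite D_mul D_exp D_binser_succ binser_succ -addn2 exprD psi_sqr exprSr.
by move: (psi ^+ j) (D psi) (binser x) (fC (x + 1)) => p d b c; ring.
Qed.

Lemma coef_psi_binser_rec j x :
  j.+1%:R * (psi ^+ j.+2 * binser x) j.+1
  = (x + 1) * (psi ^+ j.+1 * binser x) j.
Proof.
have := congr1 (fun f : fps => f j.+1) (psi_binser_ode j x).
rewrite /= fXD fpsD fn_mul fpsB fC_mul fX_mulS.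
move: ((psi ^+ j.+1 * binser (x + 1)) j.+1) => a coef_eq.
by apply: (addrI (j.+1%:R * (a - (psi ^+ j.+2 * binser x) j.+1))); rewrite -coef_eq; ring.
Qed.

Lemma coef_psi_binser_diag n x :
  (psi ^+ n.+1 * binser x) n = (x + 1) ^+ n / (n`!)%:R.
Proof.
elim: n => [|j IH]; first by rewrite expr1 fpsM big_ord1 psi0 binser0 mul1r expr0 divr1.
apply: (mulfI (natS_neq0 R j)); rewrite coef_psi_binser_rec IH factS natrM exprS.
by field; rewrite fact_neq0 add1n_neq0.
Qed.

(* Induction on [m]: multiplying by [t] turns both sides into forward
   differences in [x], since [(1+t)^(x+1) - (1+t)^x = t (1+t)^x] and
   [e^((x+2)t) - e^((x+1)t) = t ((e^t-1)/t) e^((x+1)t)]. *)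
Lemma coef_psi_binser l m x :
  (psi ^+ (l + 1 + m) * binser x) l = (expm1ser ^+ m * expser (x + 1)) l.
Proof.
elim: m l x => [|m IH] l x.
  by rewrite addn0 addn1 coef_psi_binser_diag expr0 mul1r /expser /exp_series.
have -> : (l + 1 + m.+1 = l.+1 + 1 + m)%N by rewrite addnS !addSn.
set n := (l.+1 + 1 + m)%N.
have psi_diff : psi ^+ n * binser (x + 1) - psi ^+ n * binser x
              = fX * (psi ^+ n * binser x).
  by rewrite binser_succ; move: (psi ^+ n) (binser x) => p b; ring.
have exp_diff : expm1ser ^+ m * expser (x + 1 + 1) - expm1ser ^+ m * expser (x + 1)
              = fX * (expm1ser ^+ m.+1 * expser (x + 1)).
  rewrite -expserD exprS expser1.
  by move: (expm1ser ^+ m) (expser (x + 1)) => p b; ring.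
by rewrite -fX_mulS -psi_diff fpsB !IH -fpsB exp_diff fX_mulS.
Qed.

End KeyIdentity.

Lemma bern2E (R : numFieldType) k (c : R) :
  bern2 k c = (k`!)%:R * (psi R * binser c) k.
Proof. by []. Qed.

Lemma bernoulli_ord_neg (R : numFieldType) m l (x : R) :
  bernoulli_ord (- m%:Z) l x = (l`!)%:R * (expm1ser R ^+ m * expser x) l.
Proof.
by rewrite /bernoulli_ord; case: m => [|m]; rewrite ?oppr0 /= -?fpowE ?expr0.
Qed.

Theorem theorem7 (R : numClosedFieldType) (n l : nat) (c : R) :
  (1 <= n)%N -> (l <= n - 1)%N -> c != 0 ->
  \sum_(L : {ffun 'I_n -> 'I_l.+1} | (\sum_(i < n) (L i : nat))%N == l)
      ((multinom L)%:R * \prod_(i < n) bern2 (L i) c)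
  = bernoulli_ord (l%:Z - n%:Z + 1) l (c * n%:R + 1).
Proof.
move=> n_ge1 l_le _; set m := (n - 1 - l)%N.
have n_eq : n = (l + 1 + m)%N by rewrite /m; lia.
have order_eq : (l%:Z - n%:Z + 1 = - m%:Z)%R by rewrite n_eq !PoszD; ring.
under eq_bigr do under eq_bigr do rewrite bern2E.
rewrite egf_exp exprMn binserX {1}n_eq coef_psi_binser.
by rewrite order_eq bernoulli_ord_neg.
Qed.
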